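(* Let $n=0$ and suppose $m^2<r$. Then $\bar{\mathcal{A}}_q=\bar{\mathcal{C}}_q$ and $\operatorname{End}_{\bar{\mathcal{C}}_q}\bar V^{\otimes r}=\operatorname{End}_{\bar{\mathcal{A}}_q}\bar V^{\otimes r}$.
   Context: $q$ indeterminate, $K=\mathbb{Q}(q)$, $\bar K$ an algebraic closure, $r\ge2$. $\mathcal{H}_{\bar K,r}(q)$ is the type $A$ Iwahori–Hecke algebra over $\bar K$ (generators $T_1,\dots,T_{r-1}$, $T_i^2=(q-q^{-1})T_i+1$, braid relations); the Goldman involution is the algebra automorphism with $\hat T_i=(q-q^{-1})-T_i$, and $\mathcal{H}^1_{\bar K,r}(q)=\{X:\hat X=X\}$. $\bar V$ is the $\bar K$-space with basis $v_1,\dots,v_m$ (all of even degree, $n=0$). $\pi_r$ is the $q$-permutation representation on $\bar V^{\otimes r}$: $\pi_r(T_i)=\mathrm{Id}^{\otimes i-1}\otimes T\otimes\mathrm{Id}^{\otimes r-i-1}$ with $T(v_k\otimes v_k)=q\,v_k\otimes v_k$, $T(v_k\otimes v_l)=v_l\otimes v_k+(q-q^{-1})v_k\otimes v_l$ for $k<l$, $T(v_k\otimes v_l)=v_l\otimes v_k$ for $k>l$. $\bar{\mathcal{A}}_q=\pi_r(\mathcal{H}_{\bar K,r}(q))$, $\bar{\mathcal{C}}_q=\pi_r(\mathcal{H}^1_{\bar K,r}(q))$. *)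

From HB Require Import structures.
From mathcomp Require Import all_boot all_order all_algebra all_field.
Set Implicit Arguments. Unset Strict Implicit. Unset Printing Implicit Defensive.
Import GRing.Theory.
Local Open Scope ring_scope.

Definition Kq : fieldType := {fraction {poly rat}}.
Definition qK : Kq := tofrac ('X : {poly rat}).

Definition qpar (L : fieldType) (iota : {rmorphism Kq -> L}) : L := iota qK.

(* Generator T_{i+1} (0-indexed by i : 'I_(r-1)) acts on tensor positions
   i and i+1 (0-indexed in 'I_r). *)
Lemma lpos_subproof r (i : 'I_r.-1) : (i < r)%N.
Proof. exact: leq_trans (ltn_ord i) (leq_pred r). Qed.
Lemma rpos_subproof r (i : 'I_r.-1) : (i.+1 < r)%N.
Proof. by case: r i => [[]|r] i //=; rewrite ltnS. Qed.
Definition lpos r (i : 'I_r.-1) : 'I_r := Ordinal (lpos_subproof i).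
Definition rpos r (i : 'I_r.-1) : 'I_r := Ordinal (rpos_subproof i).

(* Basis of Vbar^{(x) r}: v_{f 0} (x) ... (x) v_{f (r-1)}, f : 'I_r -> 'I_m. *)
Definition Idx (r m : nat) := {ffun 'I_r -> 'I_m}.
(* Vbar^{(x) r} as the L-vector space of coordinate functions on the basis. *)
Definition Wt (L : fieldType) (r m : nat) := {ffun Idx r m -> L^o}.

Definition ebasis (L : fieldType) r m (f : Idx r m) : Wt L r m :=
  [ffun g => (g == f)%:R].

Definition swapf r m (i : 'I_r.-1) (f : Idx r m) : Idx r m :=
  [ffun p => if p == lpos i then f (rpos i)
             else if p == rpos i then f (lpos i) else f p].

Definition Timg (L : fieldType) (q : L) r m (i : 'I_r.-1) (f : Idx r m)
    : Wt L r m :=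
  let k := f (lpos i) in let l := f (rpos i) in
  if k == l then q *: ebasis L f
  else if (k < l)%N then ebasis L (swapf i f) + (q - q^-1) *: ebasis L f
  else ebasis L (swapf i f).

Definition PiT (L : fieldType) (q : L) r m (i : 'I_r.-1) : 'End(Wt L r m) :=
  linfun (fun x : Wt L r m => \sum_(f : Idx r m) x f *: Timg q i f).

Definition commutant (L : fieldType) (vT : vectType L) (U : {vspace 'End(vT)})
    (f : 'End(vT)) : Prop :=
  forall g, g \in U -> (f \o g = g \o f)%VF.

From HB Require Import structures.
From mathcomp Require Import all_boot all_order all_algebra all_field zify.
From Stdlib Require Import Classical.
Set Implicit Arguments. Unset Strict Implicit. Unset Printing Implicit Defensive.
Import GRing.Theory Num.Theory.
Local Open Scope ring_scope.

(* Let T_i act on Vbar^(x)r by P_i = pi(T_i) and let sigma(T_i) act by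
   (q - q^-1) - P_i.  When m^2 < r these two representations have no nonzero
   intertwiner in either direction: an intertwiner Phi kills a basis tensor e_f
   by induction on f, since either f has an ascent at some i, and then
   e_f = P_i e_(f swapped at i), or f is weakly decreasing, and then it is
   constant on some m+1 consecutive positions, so Phi e_f is a vector on which m
   consecutive P_i act by -q^-1; such a q-antisymmetric vector vanishes because
   m+1 positions carry only m values.
   Over K = Q(q), which is formally real, the P_i are symmetric matrices, so the
   algebra generated by the pairs (P_i, (q - q^-1) - P_i) in M_N x M_N is closed
   under transposition and the trace form is anisotropic on it.  The orthogonal
   projection onto it commutes with left multiplication by the algebra, so its
   off-diagonal parts are intertwiners, hence zero, and (0, 1) lies in the
   algebra.  This gives a noncommutative polynomial e with e(P) = 0 and
   e((q - q^-1) - P) = 1.  Its value h = e(T) in the Hecke algebra satisfies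
   pi(h) = 0 and pi(sigma h) = 1, so pi(x) = pi(y + sigma y) with y = x - h x
   lies in pi(H^sigma) for every x. *)

(* Noncommutative polynomials; they carry the identity found over Q(q) to any
   algebra receiving Q(q). *)
Inductive ncterm (S : Type) (n : nat) : Type :=
  | NCVar of 'I_n
  | NCConst of S
  | NCAdd of ncterm S n & ncterm S n
  | NCMul of ncterm S n & ncterm S n.
Arguments NCVar {S n}. Arguments NCConst {S n}.
Arguments NCAdd {S n}. Arguments NCMul {S n}.

Section NCEval.
Variables (S : Type) (n : nat) (R : pzRingType) (c : S -> R) (x : 'I_n -> R).

Fixpoint nceval (t : ncterm S n) : R :=
  match t with
  | NCVar i => x i
  | NCConst a => c a
  | NCAdd t1 t2 => nceval t1 + nceval t2
  | NCMul t1 t2 => nceval t1 * nceval t2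
  end.

End NCEval.

Lemma nceval_morph (S : Type) (n : nat) (R1 R2 : pzRingType) (f : R1 -> R2)
    (c1 : S -> R1) (c2 : S -> R2) (x1 : 'I_n -> R1) (x2 : 'I_n -> R2) :
    {morph f : a b / a + b} -> {morph f : a b / a * b} ->
    f \o c1 =1 c2 -> f \o x1 =1 x2 ->
  forall t, f (nceval c1 x1 t) = nceval c2 x2 t.
Proof.
move=> fD fM fc fx; elim=> [i|a|t1 IH1 t2 IH2|t1 IH1 t2 IH2] /=.
- exact: fx.
- exact: fc.
- by rewrite fD IH1 IH2.
- by rewrite fM IH1 IH2.
Qed.

Lemma exists_span_of_pred (K : fieldType) (vT : vectType K) (P : vT -> Prop) :
  exists2 s : seq vT, {in s, forall v, P v} & forall v, P v -> v \in <<s>>%VS.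
Proof.
suff: forall d (s : seq vT), (\dim {:vT} - \dim <<s>> <= d)%N ->
    {in s, forall v, P v} ->
    exists2 s' : seq vT, {in s', forall v, P v} & forall v, P v -> v \in <<s'>>%VS.
  by move/(_ _ [::] (leqnn _)); apply.
elim=> [|d IHd] s le_d sP.
  exists s => // v _; suff ->: <<s>>%VS = fullv by rewrite memvf.
  by apply/eqP; rewrite eqEdim subvf -subn_eq0 -leqn0.
have [[v [Pv s'v]]|] := classic (exists v, P v /\ v \notin <<s>>%VS); last first.
  move=> noP; exists s => // v Pv.
  by case: (boolP (v \in <<s>>%VS)) => // s'v; case: noP; exists v.
apply: (IHd (v :: s)); last by move=> u; rewrite inE => /predU1P[->|/sP].
have lt_s : (\dim <<s>> < \dim <<v :: s>>)%N.
  rewrite span_cons ltn_neqAle dimvS ?addvSr // andbT.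
  apply: contraNneq s'v => /esym eq_dim.
  have -> : <<s>>%VS = (<[v]> + <<s>>)%VS.
    by apply/eqP; rewrite eqEdim addvSr eq_dim leqnn.
  exact: subvP (addvSl _ _) _ (memv_line v).
have := dimvS (subvf <<v :: s>>%VS).
lia.
Qed.

Section OrthogonalProjection.
Variables (K : fieldType) (vT : vectType K) (form : vT -> vT -> K^o).
Hypotheses (formC : forall u v, form u v = form v u)
  (form_linear : forall u, linear (form u))
  (form_anisotropic : forall u, form u u = 0 -> u = 0).
Variable V : {vspace vT}.

HB.instance Definition _ u := GRing.isLinear.Build K vT K^o *:%R (form u) (form_linear u).

Lemma form_suml (I : Type) (r : seq I) (P : pred I) (F : I -> vT) w :
  form (\sum_(i <- r | P i) F i) w = \sum_(i <- r | P i) form (F i) w.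
Proof. by rewrite formC linear_sum; apply: eq_bigr => i _; rewrite formC. Qed.

Lemma formZl a u w : form (a *: u) w = a * form u w.
Proof. by rewrite formC linearZ formC. Qed.

Definition orthv_coords (w : vT) : 'rV[K]_(\dim V) := \row_j form (tnth (vbasis V) j) w.

Fact orthv_coords_linear : linear orthv_coords.
Proof. by move=> a v w; apply/rowP => j; rewrite !mxE linearP. Qed.
HB.instance Definition _ :=
  GRing.isLinear.Build K vT 'rV[K]_(\dim V) *:%R orthv_coords orthv_coords_linear.

Definition orthv : {vspace vT} := lker (linfun orthv_coords).

Lemma mem_orthv w : w \in orthv <-> forall u, u \in V -> form u w = 0.
Proof.
rewrite memv_ker lfunE /=; split=> [/eqP/rowP w_orth u /coord_vbasis -> | w_orth].
  rewrite form_suml big1 // => j _.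
  by have := w_orth j; rewrite !mxE (tnth_nth 0) formZl => ->; rewrite mulr0.
by apply/eqP/rowP => j; rewrite !mxE w_orth ?vbasis_mem ?mem_tnth.
Qed.

Lemma capv_orthv : (V :&: orthv = 0)%VS.
Proof.
apply/eqP; rewrite -subv0; apply/subvP => u /memv_capP[Vu /mem_orthv u_orth].
by rewrite memv0; apply/eqP/form_anisotropic/u_orth.
Qed.

Lemma addv_orthv : (V + orthv = fullv)%VS.
Proof.
apply/eqP; rewrite eqEdim subvf dimv_disjoint_sum ?capv_orthv //=.
have := limg_ker_dim (linfun orthv_coords) fullv; rewrite capfv => <-.
rewrite addnC leq_add2r /orthv.
by rewrite (leq_trans (dimvS (subvf _))) // dimvf /dim /= mul1n.
Qed.

Definition orthproj : 'End(vT) := daddv_pi V orthv.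

Lemma orthproj_mem w : orthproj w \in V.
Proof. exact: memv_pi. Qed.

Lemma orthproj_orth w : w - orthproj w \in orthv.
Proof.
have w_sum : w \in (V + orthv)%VS by rewrite addv_orthv memvf.
by rewrite -{1}(daddv_pi_add capv_orthv w_sum) addrC addKr memv_pi.
Qed.

Lemma orthproj_unique w u : u \in V -> w - u \in orthv -> orthproj w = u.
Proof.
move=> Vu w_u_orth; apply/eqP; rewrite -subr_eq0 -memv0 -capv_orthv memv_cap.
rewrite memvB ?orthproj_mem //=.
have -> : orthproj w - u = (w - u) - (w - orthproj w).
  by rewrite opprB [RHS]addrC addrA subrK.
by rewrite memvB // orthproj_orth.
Qed.

End OrthogonalProjection.

Definition formally_real (R : pzRingType) :=
  forall (I : finType) (v : I -> R), \sum_i v i ^+ 2 = 0 -> forall i, v i = 0.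

Definition hom_trivial (F : fieldType) (N n : nat) (A B : 'I_n -> 'M[F]_N) :=
  forall Phi : {linear 'cV[F]_N -> 'cV[F]_N},
  (forall i x, Phi (A i *m x) = B i *m Phi x) -> forall x, Phi x = 0.

Lemma hom_trivial_mx (F : fieldType) (N n : nat) (A B : 'I_n -> 'M[F]_N)
    (Phi : {linear 'M[F]_N -> 'M[F]_N}) :
  hom_trivial A B -> (forall i X, Phi (A i *m X) = B i *m Phi X) ->
  forall X, Phi X = 0.
Proof.
move=> homAB PhiAB.
have Phi_col0 j k (x : 'cV_N) :
    Phi (x *m delta_mx (0 : 'I_1) j) *m delta_mx k (0 : 'I_1) = 0.
  apply: (homAB (mulmxr (delta_mx k 0) \o Phi \o mulmxr (delta_mx 0 j))) => i y /=.
  by rewrite -mulmxA PhiAB mulmxA.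
move=> X; rewrite (matrix_sum_delta X) linear_sum big1 // => i _.
rewrite linear_sum big1 // => j _; rewrite linearZ -(mul_delta_mx (0 : 'I_1)).
apply/matrixP => a k; rewrite !mxE.
have := congr1 (fun M : 'cV[F]_N => M a 0) (Phi_col0 j k (delta_mx i (0 : 'I_1))).
by rewrite -colE !mxE => ->; rewrite mulr0.
Qed.

Lemma hom_trivial_shift (F : fieldType) (N n : nat) (A : 'I_n -> 'M[F]_N) (c : F) :
  hom_trivial A (fun i => c%:M - A i) -> hom_trivial (fun i => c%:M - A i) A.
Proof.
move=> homA Phi Phi_int; apply: homA => i x.
have -> : A i *m x = c *: x - (c%:M - A i) *m x.
  by rewrite mulmxBl mul_scalar_mx opprB addrC subrK.
by rewrite linearB linearZ /= Phi_int mulmxBl mul_scalar_mx.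
Qed.

Section TransposeClosedDensity.
Variables (F : fieldType) (N n : nat) (A B : 'I_n -> 'M[F]_N).
Hypotheses (F_real : formally_real F)
  (A_sym : forall i, (A i)^T = A i) (B_sym : forall i, (B i)^T = B i)
  (homAB : hom_trivial A B) (homBA : hom_trivial B A).

Local Notation mx2 := ('M[F]_N * 'M[F]_N)%type.

Definition mx2_gen i : mx2 := (A i, B i).
Definition mx2_const (a : F) : mx2 := (a%:M, a%:M).
Definition generated (Z : mx2) := exists t, nceval mx2_const mx2_gen t = Z.
Definition trmx2 (Z : mx2) : mx2 := (Z.1^T, Z.2^T).

Lemma generatedD Z W : generated Z -> generated W -> generated (Z + W).
Proof. by case=> t <- [u <-]; exists (NCAdd t u). Qed.

Lemma generatedM Z W : generated Z -> generated W -> generated (Z * W).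
Proof. by case=> t <- [u <-]; exists (NCMul t u). Qed.

Lemma generatedZ a Z : generated Z -> generated (a *: Z).
Proof.
case=> t <-; exists (NCMul (NCConst a) t) => /=.
by case: (nceval _ _ _) => Z1 Z2; congr pair; exact: mul_scalar_mx.
Qed.

Lemma generated1 : generated 1.
Proof. by exists (NCConst 1). Qed.

Lemma trmx2D Z W : trmx2 (Z + W) = trmx2 Z + trmx2 W.
Proof. by rewrite /trmx2 /= !linearD. Qed.

Lemma trmx2M Z W : trmx2 (Z * W) = trmx2 W * trmx2 Z.
Proof. by rewrite /trmx2 /= !trmx_mul. Qed.

Lemma generated_tr Z : generated Z -> generated (trmx2 Z).
Proof.
case=> t <-; elim: t => [i|a|t1 IH1 t2 IH2|t1 IH1 t2 IH2] /=.
- by exists (NCVar i); rewrite /trmx2 /= A_sym B_sym.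
- by exists (NCConst a); rewrite /trmx2 /= !tr_scalar_mx.
- by rewrite trmx2D; apply: generatedD.
- by rewrite trmx2M; apply: generatedM.
Qed.

Lemma generated_span (s : seq mx2) :
  {in s, forall Z, generated Z} -> forall Z, Z \in <<s>>%VS -> generated Z.
Proof.
move=> sG Z /(coord_span (X := in_tuple s)) ->; elim/big_ind: _ => [||i _].
- by have := generatedZ 0 generated1; rewrite scale0r.
- exact: generatedD.
by apply/generatedZ/sG/mem_nth.
Qed.

Definition mx2_form (Z W : mx2) : F^o := \tr (Z.1 *m W.1^T) + \tr (Z.2 *m W.2^T).

Lemma mx2_formC Z W : mx2_form Z W = mx2_form W Z.
Proof.
rewrite /mx2_form -[\tr (Z.1 *m _)]mxtrace_tr -[\tr (Z.2 *m _)]mxtrace_tr.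
by rewrite !trmx_mul !trmxK.
Qed.

Lemma mx2_form_linear Z : linear (mx2_form Z).
Proof.
move=> a W1 W2; rewrite /mx2_form /= !linearD !linearZ /=.
by rewrite addrACA -mulrDr.
Qed.

Lemma mx2_form_anisotropic Z : mx2_form Z Z = 0 -> Z = 0.
Proof.
case: Z => Z1 Z2 Zform.
pose v (s : ('I_N * 'I_N) + ('I_N * 'I_N)) :=
  match s with inl p => Z1 p.1 p.2 | inr p => Z2 p.1 p.2 end.
have trace_sqr (M : 'M[F]_N) : \tr (M *m M^T) = \sum_(p : 'I_N * 'I_N) M p.1 p.2 ^+ 2.
  rewrite /mxtrace -(pair_bigA _ (fun i j => M i j ^+ 2)) /=.
  by apply: eq_bigr => i _; rewrite mxE; apply: eq_bigr => j _; rewrite mxE expr2.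
have := @F_real _ v; rewrite big_sumType /= -!trace_sqr => /(_ Zform) v0.
by congr pair; apply/matrixP => i j; rewrite mxE;
  [apply: (v0 (inl (i, j))) | apply: (v0 (inr (i, j)))].
Qed.

Lemma mx2_formM U Z W : mx2_form U (Z * W) = mx2_form (trmx2 Z * U) W.
Proof.
have tr_cycle (U1 Z1 W1 : 'M[F]_N) :
    \tr (U1 *m (Z1 *m W1)^T) = \tr ((Z1^T *m U1) *m W1^T).
  by rewrite trmx_mul mulmxA mxtrace_mulC mulmxA.
by rewrite /mx2_form /= !tr_cycle.
Qed.

Section Projection.
Variable Bv : {vspace mx2}.
Hypothesis memBv : forall Z, Z \in Bv <-> generated Z.

Local Notation proj := (orthproj mx2_form Bv).
Let mem_orthB := mem_orthv mx2_formC mx2_form_linear Bv.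
Let proj_orth := orthproj_orth mx2_formC mx2_form_linear mx2_form_anisotropic Bv.
Let proj_unique := orthproj_unique mx2_formC mx2_form_linear mx2_form_anisotropic (V := Bv).

Lemma proj_mull Z W : generated Z -> proj (Z * W) = Z * proj W.
Proof.
move=> genZ; apply: proj_unique.
  by apply/memBv/generatedM => //; apply/memBv/orthproj_mem.
rewrite -mulrBr; apply/mem_orthB => U /memBv genU; rewrite mx2_formM.
by apply/(mem_orthB _).1; [exact: proj_orth | apply/memBv/generatedM/genU/generated_tr].
Qed.

Definition proj12 (X : 'M[F]_N) : 'M[F]_N := (proj (X, 0)).2.
Definition proj21 (Y : 'M[F]_N) : 'M[F]_N := (proj (0, Y)).1.

Fact proj12_linear : linear proj12.
Proof.
move=> a X Y; rewrite /proj12.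
have -> : ((a *: X + Y, 0) : mx2) = a *: (X, 0) + (Y, 0).
  by congr pair; rewrite /= scaler0 addr0.
by rewrite linearP.
Qed.
HB.instance Definition _ :=
  GRing.isLinear.Build F 'M[F]_N 'M[F]_N *:%R proj12 proj12_linear.

Fact proj21_linear : linear proj21.
Proof.
move=> a X Y; rewrite /proj21.
have -> : ((0, a *: X + Y) : mx2) = a *: (0, X) + (0, Y).
  by congr pair; rewrite /= scaler0 addr0.
by rewrite linearP.
Qed.
HB.instance Definition _ :=
  GRing.isLinear.Build F 'M[F]_N 'M[F]_N *:%R proj21 proj21_linear.

Lemma proj12_eq0 X : proj12 X = 0.
Proof.
apply: (hom_trivial_mx homAB) => {X} i X /=; rewrite /proj12.
have -> : ((A i *m X, 0) : mx2) = mx2_gen i * (X, 0).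
  by congr pair; rewrite /= mulr0.
by rewrite proj_mull //; exists (NCVar i).
Qed.

Lemma proj21_eq0 Y : proj21 Y = 0.
Proof.
apply: (hom_trivial_mx homBA) => {Y} i Y /=; rewrite /proj21.
have -> : ((0, B i *m Y) : mx2) = mx2_gen i * (0, Y).
  by congr pair; rewrite /= mulr0.
by rewrite proj_mull //; exists (NCVar i).
Qed.

Lemma generated01 : generated (0, 1).
Proof.
have proj1 : proj 1 = 1.
  by apply: proj_unique; rewrite ?subrr ?mem0v //; apply/memBv/generated1.
have split1 : (1 : mx2) = (1, 0) + (0, 1) by congr pair; rewrite /= ?addr0 ?add0r.
have proj01 : proj (0, 1) = (0, 1).
  have := congr1 snd proj1; rewrite split1 linearD /= -/(proj12 1) proj12_eq0 add0r.
  move=> proj01_2; rewrite [LHS]surjective_pairing proj01_2 -/(proj21 1) proj21_eq0.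
  by congr pair; rewrite add0r.
by apply/memBv; rewrite -proj01 orthproj_mem.
Qed.

End Projection.

Lemma exists_separating_ncterm :
  exists t, nceval (fun a => a%:M) A t = 0 /\ nceval (fun a => a%:M) B t = 1.
Proof.
have [s sG spanG] := exists_span_of_pred generated.
have memB Z : Z \in <<s>>%VS <-> generated Z.
  by split; [exact: generated_span | exact: spanG].
have [t t01] := generated01 memB.
exists t; split.
- by rewrite -(@nceval_morph _ _ _ _ fst mx2_const _ mx2_gen) ?t01.
- by rewrite -(@nceval_morph _ _ _ _ snd mx2_const _ mx2_gen) ?t01.
Qed.

End TransposeClosedDensity.

Section SwapIndices.
Variables r m : nat.
Implicit Types (f g : Idx r m) (i : 'I_r.-1).

Lemma lpos_neq_rpos i : lpos i != rpos i.
Proof. by rewrite -val_eqE /= neq_ltn ltnSn. Qed.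

Lemma swapf_lpos i g : swapf i g (lpos i) = g (rpos i).
Proof. by rewrite ffunE eqxx. Qed.

Lemma swapf_rpos i g : swapf i g (rpos i) = g (lpos i).
Proof. by rewrite ffunE eq_sym (negPf (lpos_neq_rpos i)) eqxx. Qed.

Lemma swapf_other i g p : p != lpos i -> p != rpos i -> swapf i g p = g p.
Proof. by move=> /negPf pl /negPf pr; rewrite ffunE pl pr. Qed.

Lemma swapfK i : involutive (@swapf r m i).
Proof.
move=> g; apply/ffunP => p.
have [->|pl] := eqVneq p (lpos i); first by rewrite swapf_lpos swapf_rpos.
have [->|pr] := eqVneq p (rpos i); first by rewrite swapf_rpos swapf_lpos.
by rewrite !swapf_other.
Qed.

Lemma swapf_id i g : g (lpos i) = g (rpos i) -> swapf i g = g.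
Proof.
move=> g_lr; apply/ffunP => p; rewrite ffunE.
by case: eqP => [->|_]; [|case: eqP => [->|]].
Qed.

(* Values of [g] indexed by [nat] positions, with junk value [0] beyond [r]. *)
Definition idxn g (k : nat) : nat := if insub k is Some p then val (g p) else 0.

Lemma idxnE g (p : 'I_r) : idxn g p = g p.
Proof. by rewrite /idxn valK. Qed.

Lemma idxn_lpos g i : idxn g i = g (lpos i).
Proof. exact: (idxnE g (lpos i)). Qed.

Lemma idxn_rpos g i : idxn g i.+1 = g (rpos i).
Proof. exact: (idxnE g (rpos i)). Qed.

Lemma idxn_swapf i g k :
  idxn (swapf i g) k =
  if k == i then idxn g i.+1 else if k == i.+1 then idxn g i else idxn g k.
Proof.
have ir : (i.+1 < r)%N := ltn_ord (rpos i).
have [kr | rk] := ltnP k r; last first.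
  have [ki ki1] : k != i /\ k != i.+1 by split; rewrite neq_ltn; apply/orP; right; lia.
  by rewrite (negPf ki) (negPf ki1) /idxn !insubF // ltnNge rk.
rewrite -[k]/(val (Ordinal kr)) idxn_lpos idxn_rpos !idxnE ffunE -!val_eqE /=.
by case: ifP => // _; case: ifP.
Qed.

Definition ascent_weight g : nat := \sum_(p : 'I_r) p * g p.

Lemma ascent_weight_swapf i g :
  (g (lpos i) < g (rpos i))%N -> (ascent_weight (swapf i g) < ascent_weight g)%N.
Proof.
move=> asc; have rl : rpos i != lpos i by rewrite eq_sym lpos_neq_rpos.
rewrite /ascent_weight (bigD1 (lpos i)) //= (bigD1 (rpos i)) //=.
rewrite [X in (_ < X)%N](bigD1 (lpos i)) //= [X in (_ < _ + X)%N](bigD1 (rpos i)) //=.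
rewrite swapf_lpos swapf_rpos (eq_bigr (fun p : 'I_r => p * g p)%N); last first.
  by move=> p /andP[pr pl]; rewrite swapf_other.
move: asc; set a := val (g (lpos i)); set b := val (g (rpos i)) => asc.
rewrite !mulSn; lia.
Qed.

Lemma nonincreasing_flat_window f : (m ^ 2 < r)%N ->
    (forall i, f (rpos i) <= f (lpos i))%N ->
  exists j0, (j0 + m < r)%N /\ forall k, (j0 <= k < j0 + m)%N -> idxn f k = idxn f k.+1.
Proof.
move=> mmr f_noninc; rewrite -mulnn in mmr; set u := idxn f.
have u_step k : (k.+1 < r)%N -> (u k.+1 <= u k)%N.
  move=> kr; have kr' : (k < r.-1)%N by lia.
  by rewrite /u -[k]/(val (Ordinal kr')) idxn_lpos idxn_rpos f_noninc.
have u_mono a b : (a <= b)%N -> (b < r)%N -> (u b <= u a)%N.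
  elim: b => [|b IHb] ab br; first by rewrite leqn0 in ab; rewrite (eqP ab).
  move: ab; rewrite leq_eqVlt => /predU1P[-> // | ab].
  exact: leq_trans (u_step _ br) (IHb ab (ltnW br)).
have u0 : (u 0 < m)%N.
  by rewrite /u -[0%N]/(val (Ordinal (leq_ltn_trans (leq0n _) mmr))) idxnE.
have [/existsP[t /eqP flat] | /existsPn steep] :=
  boolP [exists t : 'I_m, u (t * m)%N == u (t * m + m)%N].
  have tmr : (t * m + m < r)%N.
    have : (t.+1 * m <= m * m)%N by rewrite leq_mul2r ltn_ord orbT.
    rewrite mulSn; lia.
  exists (t * m)%N; split=> // k /andP[tk km].
  have := u_mono _ _ tk (ltn_trans km tmr); have := u_step k (leq_ltn_trans km tmr).
  have := u_mono k.+1 (t * m + m)%N km tmr; lia.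
have drop t : (t <= m)%N -> (u (t * m) + t <= u 0)%N.
  elim: t => [|t IHt] tm; first by rewrite mul0n addn0.
  have tmr : (t * m + m < r)%N.
    have : (t.+1 * m <= m * m)%N by rewrite leq_mul2r tm orbT.
    rewrite mulSn; lia.
  have /= /eqP := steep (Ordinal tm); have := u_mono _ _ (leq_addr m (t * m)) tmr.
  have := IHt (ltnW tm); have -> : (t.+1 * m = t * m + m)%N by rewrite mulSn addnC.
  lia.
by have := drop m (leqnn m); lia.
Qed.

End SwapIndices.

Section QPermutationMatrices.
Variables (F : fieldType) (q : F) (r m : nat).
Local Notation N := #|{: Idx r m}|.
Implicit Types (f g h : Idx r m) (i : 'I_r.-1).

Lemma Timg_eq i g : g (lpos i) = g (rpos i) -> Timg q i g = q *: ebasis F g.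
Proof. by move=> g_lr; rewrite /Timg g_lr eqxx. Qed.

Lemma Timg_gt i g : (g (rpos i) < g (lpos i))%N -> Timg q i g = ebasis F (swapf i g).
Proof.
move=> g_rl; rewrite /Timg ifF ?ifF //; first by rewrite ltnNge ltnW.
by apply/negbTE; rewrite neq_ltn g_rl orbT.
Qed.

Lemma Timg_neq i f g : f != g -> Timg q i g f = (f == swapf i g)%:R.
Proof.
move=> fg; rewrite /Timg; case: ifP => [/eqP g_lr|_].
  by rewrite swapf_id // !ffunE (negPf fg) mulr0n scaler0.
by case: ifP => _; rewrite !ffunE // (negPf fg) mulr0n scaler0 addr0.
Qed.

Lemma Timg_sym i f g : Timg q i g f = Timg q i f g.
Proof.
have [->//|fg] := eqVneq f g.
rewrite !Timg_neq // 1?eq_sym //.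
by rewrite -(inj_eq (can_inj (swapfK i)) g) swapfK eq_sym.
Qed.

Definition qperm_mx i : 'M[F]_N := \matrix_(a, b) Timg q i (enum_val b) (enum_val a).

Lemma qperm_mx_sym i : (qperm_mx i)^T = qperm_mx i.
Proof. by apply/matrixP => a b; rewrite !mxE Timg_sym. Qed.

Definition basis_col g : 'cV[F]_N := delta_mx (enum_rank g) 0.

Lemma qperm_mx_basis_col i g :
  qperm_mx i *m basis_col g = \col_a Timg q i g (enum_val a).
Proof. by apply/colP => a; rewrite -colE !mxE enum_rankK. Qed.

Lemma ebasis_col h : \col_(a < N) ebasis F h (enum_val a) = basis_col h.
Proof.
apply/colP => a; rewrite !mxE ffunE eqxx andbT.
by rewrite -(inj_eq enum_val_inj) enum_rankK.
Qed.

Lemma qperm_mx_coord i (w : 'cV[F]_N) f :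
  (qperm_mx i *m w) (enum_rank f) 0 = \sum_b Timg q i f (enum_val b) * w b 0.
Proof. by rewrite mxE; apply: eq_bigr => b _; rewrite mxE enum_rankK Timg_sym. Qed.

Lemma sum_ebasis_coord h (w : 'cV[F]_N) :
  \sum_b ebasis F h (enum_val b) * w b 0 = w (enum_rank h) 0.
Proof.
rewrite (bigD1 (enum_rank h)) //= big1 ?addr0 => [|b /negPf bh].
  by rewrite enum_rankK ffunE eqxx mul1r.
by rewrite ffunE -(inj_eq enum_rank_inj) enum_valK bh mul0r.
Qed.

Hypothesis q_qinv_neq0 : q + q^-1 != 0.

Lemma qinv_neq0 : q^-1 != 0.
Proof.
apply: contraNneq q_qinv_neq0 => /eqP; rewrite invr_eq0 => /eqP ->.
by rewrite invr0 addr0.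
Qed.

Section AntisymmetricVector.
Variables (i : 'I_r.-1) (w : 'cV[F]_N).
Hypothesis w_antisym : qperm_mx i *m w = - q^-1 *: w.

Lemma antisym_coord_eq0 g : g (lpos i) = g (rpos i) -> w (enum_rank g) 0 = 0.
Proof.
move=> g_lr; have := qperm_mx_coord i w g; rewrite w_antisym Timg_eq //.
under eq_bigr => b _ do rewrite ffunE /= -mulrA.
rewrite -mulr_sumr sum_ebasis_coord !mxE => /eqP.
by rewrite -subr_eq0 -mulrBl -opprD mulf_eq0 oppr_eq0 addrC (negPf q_qinv_neq0) => /eqP.
Qed.

Lemma antisym_coord_swapf g :
  (w (enum_rank (swapf i g)) 0 == 0) = (w (enum_rank g) 0 == 0).
Proof.
have qN_neq0 : - q^-1 != 0 by rewrite oppr_eq0 qinv_neq0.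
have swap_gt h : (h (rpos i) < h (lpos i))%N ->
    w (enum_rank (swapf i h)) 0 = - q^-1 * w (enum_rank h) 0.
  move=> h_rl; have := qperm_mx_coord i w h.
  by rewrite w_antisym Timg_gt // sum_ebasis_coord mxE.
case: (ltngtP (g (rpos i)) (g (lpos i))) => [g_rl|g_lr|/esym/val_inj g_lr].
- by rewrite swap_gt // mulf_eq0 (negPf qN_neq0).
- have := swap_gt (swapf i g); rewrite swapf_lpos swapf_rpos swapfK => /(_ g_lr) ->.
  by rewrite mulf_eq0 (negPf qN_neq0).
- by rewrite swapf_id.
Qed.

End AntisymmetricVector.

Section AntisymmetricWindow.
Variables (j0 : nat) (w : 'cV[F]_N).
Hypotheses (window_lt : (j0 + m < r)%N)
  (w_antisym : forall i : 'I_r.-1,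
     (j0 <= i < j0 + m)%N -> qperm_mx i *m w = - q^-1 *: w).

Lemma window_repeat_coord_eq0 d g a :
  (j0 <= a)%N -> (a + d < j0 + m)%N -> idxn g a = idxn g (a + d).+1 ->
  w (enum_rank g) 0 = 0.
Proof.
elim: d g a => [|d IHd] g a j0a adm g_eq.
  have ar : (a < r.-1)%N by lia.
  apply: (antisym_coord_eq0 (i := Ordinal ar)); first by apply: w_antisym => /=; lia.
  apply: val_inj; move: g_eq.
  by rewrite addn0 (idxn_lpos g (Ordinal ar)) (idxn_rpos g (Ordinal ar)).
have ir : (a + d.+1 < r.-1)%N by lia.
pose i := Ordinal ir.
apply/eqP; rewrite -(antisym_coord_swapf (i := i)); last by apply: w_antisym => /=; lia.
apply/eqP/(IHd _ a) => //; first lia.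
rewrite !idxn_swapf /= !addnS eqxx.
by rewrite ifF ?ifF ?g_eq ?addnS //; apply/negbTE/eqP; lia.
Qed.

Lemma antisym_window_eq0 : w = 0.
Proof.
apply/colP => a; rewrite mxE -[a]enum_valK; set g := enum_val a.
have pos_lt (t : 'I_m.+1) : (j0 + t < r)%N by have := ltn_ord t; lia.
pose vals (t : 'I_m.+1) := g (Ordinal (pos_lt t)).
have /injectivePn[t1 [t2 t12 /eqP vals12]] : ~~ injectiveb vals.
  by apply/injectiveP => /leq_card; rewrite !card_ord ltnn.
wlog lt12 : t1 t2 t12 vals12 / (t1 < t2)%N.
  move=> W; case: (ltngtP t1 t2) => [|t21|/val_inj t12eq]; first exact: W.
    by apply: (W t2 t1) => //; rewrite eq_sym.
  by rewrite t12eq eqxx in t12.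
apply: (window_repeat_coord_eq0 (d := t2 - t1 - 1) (a := j0 + t1)%N); try lia.
  by have := ltn_ord t2; lia.
have -> : ((j0 + t1 + (t2 - t1 - 1)).+1 = j0 + t2)%N by lia.
rewrite -[(j0 + t1)%N]/(val (Ordinal (pos_lt t1))).
rewrite -[(j0 + t2)%N]/(val (Ordinal (pos_lt t2))) !idxnE.
by congr val; exact: (eqP vals12).
Qed.

End AntisymmetricWindow.

Lemma qperm_mx_basis_eq i g :
  g (lpos i) = g (rpos i) -> qperm_mx i *m basis_col g = q *: basis_col g.
Proof.
move=> g_lr; rewrite qperm_mx_basis_col Timg_eq // -ebasis_col.
by apply/colP => a; rewrite !mxE ffunE.
Qed.

Lemma qperm_mx_basis_gt i g :
  (g (rpos i) < g (lpos i))%N -> qperm_mx i *m basis_col g = basis_col (swapf i g).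
Proof. by move=> g_rl; rewrite qperm_mx_basis_col Timg_gt // ebasis_col. Qed.

Lemma qperm_hom_trivial :
  (m ^ 2 < r)%N -> hom_trivial qperm_mx (fun i => (q - q^-1)%:M - qperm_mx i).
Proof.
move=> mmr Phi Phi_int.
suff Phi_basis f : Phi (basis_col f) = 0.
  move=> x; rewrite (matrix_sum_delta x) linear_sum big1 // => a _.
  rewrite big_ord1 linearZZ -[a]enum_valK (Phi_basis (enum_val a)).
  by rewrite scaler0.
have [k] := ubnP (ascent_weight f); elim: k f => // k IHk f wf_lt.
have [/existsP[i f_lr] | /existsPn no_ascent] :=
  boolP [exists i, f (lpos i) < f (rpos i)]%N.
  have <- : qperm_mx i *m basis_col (swapf i f) = basis_col f.
    rewrite qperm_mx_basis_gt ?swapf_lpos ?swapf_rpos //.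
    by congr basis_col; exact: swapfK.
  rewrite Phi_int IHk ?mulmx0 //.
  by apply: leq_trans (ascent_weight_swapf f_lr) _.
have f_noninc i : (f (rpos i) <= f (lpos i))%N by rewrite leqNgt no_ascent.
have [j0 [j0m flat]] := nonincreasing_flat_window mmr f_noninc.
apply: (antisym_window_eq0 j0m) => i /andP[j0i im].
have f_lr : f (lpos i) = f (rpos i).
  by apply: val_inj; rewrite /= -idxn_lpos -idxn_rpos flat ?j0i.
have := Phi_int i (basis_col f); set w := Phi (basis_col f).
rewrite qperm_mx_basis_eq // linearZZ mulmxBl mul_scalar_mx -/w => qw.
have -> : qperm_mx i *m w = (q - q^-1) *: w - q *: w by rewrite qw opprB addrC subrK.
by rewrite -scalerBl addrAC subrr add0r.
Qed.

End QPermutationMatrices.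

Lemma poly_formally_real (R : realDomainType) : formally_real {poly R}.
Proof.
move=> I p p_sqr0 i.
have p_root (x : R) : (p i).[x] = 0.
  have := congr1 (horner^~ x) p_sqr0; rewrite horner_sum horner0.
  under eq_bigr do rewrite horner_exp.
  move=> sum0.
  have /eqP := psumr_eq0P (fun j _ => sqr_ge0 (p j).[x]) sum0 (i := i) isT.
  by rewrite sqrf_eq0 => /eqP.
apply: (@roots_geq_poly_eq0 _ _ [seq k%:R | k <- iota 0 (size (p i))]).
- by apply/allP => _ /mapP[k _ ->]; rewrite /root p_root.
- by rewrite map_inj_uniq ?iota_uniq // => a b /eqP; rewrite eqr_nat => /eqP.
- by rewrite size_map size_iota.
Qed.

Lemma fraction_numden (R : idomainType) (x : {fraction R}) :
  exists2 nd : R * R, nd.2 != 0 & x = tofrac nd.1 / tofrac nd.2.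
Proof.
exists (\n_(repr x), \d_(repr x)); first exact: denom_ratioP.
rewrite -{1}[x]reprK /GRing.inv /= /GRing.mul /=; unlock tofrac.
rewrite -FracField.pi_inv -FracField.pi_mul /FracField.mulf /FracField.invf /=.
by rewrite !numden_Ratio ?oner_neq0 ?denom_ratioP // mulr1 mul1r Ratio_numden.
Qed.

Lemma fraction_formally_real (R : idomainType) :
  formally_real R -> formally_real {fraction R}.
Proof.
move=> R_real I v v_sqr0.
have /fin_all_exists[nd ndP] i : exists nd : R * R,
    nd.2 != 0 /\ v i = tofrac nd.1 / tofrac nd.2.
  by have [nd ? ?] := fraction_numden (v i); exists nd.
pose D := \prod_i (nd i).2.
have D_neq0 : tofrac D != 0 :> {fraction R}.
  by rewrite tofrac_eq0; apply/prodf_neq0 => i _; case: (ndP i).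
pose u i := (nd i).1 * \prod_(j | j != i) (nd j).2.
have vD i : v i * tofrac D = tofrac (u i).
  have [nd2_neq0 ->] := ndP i; rewrite /D (bigD1 i) //= !rmorphM /= mulrA divfK //.
  by rewrite tofrac_eq0.
have u_sqr0 : \sum_i u i ^+ 2 = 0.
  apply/eqP; rewrite -tofrac_eq0 rmorph_sum /=.
  under eq_bigr do rewrite rmorphXn /= -vD exprMn.
  by rewrite -mulr_suml v_sqr0 mul0r.
move=> i; apply/eqP; rewrite -(mulIr_eq0 _ (mulIf D_neq0)) vD.
by rewrite (R_real _ _ u_sqr0 i) rmorph0.
Qed.

Lemma Kq_formally_real : formally_real Kq.
Proof. exact: fraction_formally_real (@poly_formally_real rat). Qed.

Lemma formally_real_addr_inv_neq0 (F : fieldType) (x : F) :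
  formally_real F -> x != 0 -> x + x^-1 != 0.
Proof.
move=> F_real x_neq0; apply/eqP => xx_eq0.
have : \sum_(b : bool) (if b then x else 1) ^+ 2 = 0.
  by rewrite big_bool /= expr1n expr2 -(mulfV x_neq0) -mulrDr xx_eq0 mulr0.
by move/F_real/(_ false)/eqP; rewrite oner_eq0.
Qed.

Lemma qK_neq0 : qK != 0.
Proof. by rewrite tofrac_eq0 polyX_eq0. Qed.

Lemma exists_qperm_separating_ncterm (m r : nat) : (m ^ 2 < r)%N ->
  exists t : ncterm Kq r.-1,
    nceval (fun a => a%:M) (qperm_mx qK (r := r) m) t = 0 /\
    nceval (fun a => a%:M) (fun i => (qK - qK^-1)%:M - qperm_mx qK (r := r) m i) t = 1.
Proof.
move=> mmr; have qq := formally_real_addr_inv_neq0 Kq_formally_real qK_neq0.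
apply: exists_separating_ncterm.
- exact: Kq_formally_real.
- exact: qperm_mx_sym.
- by move=> i; rewrite linearB /= tr_scalar_mx qperm_mx_sym.
- exact: qperm_hom_trivial.
- exact/hom_trivial_shift/qperm_hom_trivial.
Qed.

Definition PiT_fun (L : fieldType) (q : L) r m (i : 'I_r.-1) (x : Wt L r m) :
    Wt L r m :=
  \sum_(f : Idx r m) x f *: Timg q i f.

Fact PiT_fun_linear (L : fieldType) (q : L) r m i : linear (@PiT_fun L q r m i).
Proof.
move=> a x y; rewrite /PiT_fun scaler_sumr -big_split.
by apply: eq_bigr => f _; rewrite !ffunE scalerDl scalerA.
Qed.
HB.instance Definition _ (L : fieldType) (q : L) r m i :=
  GRing.isLinear.Build L (Wt L r m) (Wt L r m) *:%R (@PiT_fun L q r m i)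
    (@PiT_fun_linear L q r m i).

Lemma PiTE (L : fieldType) (q : L) r m (i : 'I_r.-1) x :
  PiT q m i x = \sum_(f : Idx r m) x f *: Timg q i f.
Proof. exact: (lfunE (@PiT_fun L q r m i)). Qed.

Lemma Timg_map (F1 F2 : fieldType) (phi : {rmorphism F1 -> F2}) (q : F1) r m
    (i : 'I_r.-1) (g f : Idx r m) :
  phi (Timg q i g f) = Timg (phi q) i g f.
Proof.
by rewrite /Timg; case: ifP => _; [|case: ifP => _];
  rewrite !ffunE /= ?rmorphD ?rmorphM ?rmorphB ?fmorphV ?rmorph_nat.
Qed.

Section MatrixToLfun.
Variables (F1 F2 : fieldType) (phi : {rmorphism F1 -> F2}) (r m : nat).
Local Notation N := #|{: Idx r m}|.
Local Notation W := (Wt F2 r m).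

Definition mx_lfun_fun (M : 'M[F1]_N) (x : W) : W :=
  [ffun g => \sum_b phi (M (enum_rank g) b) * x (enum_val b)].

Fact mx_lfun_fun_linear M : linear (mx_lfun_fun M).
Proof.
move=> a x y; apply/ffunP => g; rewrite !ffunE scaler_sumr -big_split.
by apply: eq_bigr => b _; rewrite !ffunE /= mulrDr mulrCA.
Qed.
HB.instance Definition _ M :=
  GRing.isLinear.Build F2 W W *:%R (mx_lfun_fun M) (mx_lfun_fun_linear M).

Definition mx_lfun (M : 'M[F1]_N) : 'End(W) := linfun (mx_lfun_fun M).

Lemma mx_lfunE M x g :
  mx_lfun M x g = \sum_b phi (M (enum_rank g) b) * x (enum_val b).
Proof. by rewrite lfunE ffunE. Qed.

Fact mx_lfun_is_nmod_morphism : nmod_morphism mx_lfun.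
Proof.
split=> [|M1 M2]; apply/lfunP => x; apply/ffunP => g.
  by rewrite mx_lfunE zero_lfunE ffunE big1 // => b _; rewrite mxE rmorph0 mul0r.
rewrite add_lfunE ffunE !mx_lfunE -big_split.
by apply: eq_bigr => b _; rewrite mxE rmorphD mulrDl.
Qed.
HB.instance Definition _ :=
  GRing.isNmodMorphism.Build 'M[F1]_N 'End(W) mx_lfun mx_lfun_is_nmod_morphism.

Lemma mx_lfunB M1 M2 : mx_lfun (M1 - M2) = mx_lfun M1 - mx_lfun M2.
Proof. exact: raddfB. Qed.

Lemma mx_lfunM M1 M2 : mx_lfun (M1 *m M2) = (mx_lfun M1 \o mx_lfun M2)%VF.
Proof.
apply/lfunP => x; apply/ffunP => g; rewrite comp_lfunE !mx_lfunE.
under eq_bigr => b _ do rewrite mxE rmorph_sum mulr_suml.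
rewrite exchange_big /=; apply: eq_bigr => k _; rewrite mx_lfunE enum_valK mulr_sumr.
by apply: eq_bigr => b _; rewrite rmorphM mulrA.
Qed.

Lemma mx_lfun_scalar a : mx_lfun a%:M = phi a *: \1%VF.
Proof.
apply/lfunP => x; apply/ffunP => g; rewrite scale_lfunE id_lfunE ffunE mx_lfunE.
rewrite (bigD1 (enum_rank g)) //= big1 ?addr0 => [|b gb].
  by rewrite mxE eqxx mulr1n enum_rankK.
by rewrite mxE eq_sym (negPf gb) mulr0n rmorph0 mul0r.
Qed.

Lemma mx_lfun_qperm q i : mx_lfun (qperm_mx q m i) = PiT (phi q) m i.
Proof.
apply/lfunP => x; apply/ffunP => g; rewrite PiTE mx_lfunE sum_ffunE.
rewrite [RHS](reindex (@enum_val (Idx r m) (mem predT))) /=; last first.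
  by exists enum_rank => b _; rewrite ?enum_valK ?enum_rankK.
by apply: eq_bigr => b _; rewrite mxE enum_rankK ffunE mulrC Timg_map.
Qed.

End MatrixToLfun.
Arguments mx_lfun {F1 F2} phi {r m} M.

(* [lfun_comp_nzRingType] of vector.v needs a nonzero space. *)
Definition lfun_ring (K : nzRingType) (vT : vectType K) : Type := 'End(vT).
HB.instance Definition _ (K : nzRingType) (vT : vectType K) :=
  GRing.Zmodule.on (@lfun_ring K vT).
HB.instance Definition _ (K : nzRingType) (vT : vectType K) :=
  GRing.Zmodule_isPzRing.Build (@lfun_ring K vT)
  (@comp_lfunA _ vT vT vT vT) (@comp_lfun1l _ vT vT) (@comp_lfun1r _ vT vT)
  (@comp_lfunDl _ vT vT vT) (@comp_lfunDr _ vT vT vT).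

Lemma lfun_nceval (K L : fieldType) (iota : {rmorphism K -> L}) r m (H : falgType L)
    (n : nat) (T : 'I_n -> H) (A : 'I_n -> 'M[K]_#|{: Idx r m}|)
    (f : {linear H -> 'End(Wt L r m)}) :
    f 1 = \1%VF -> (forall x y, f (x * y) = (f x \o f y)%VF) ->
    (forall i, f (T i) = mx_lfun iota (A i)) ->
  forall t, f (nceval (fun a => (iota a)%:A) T t) =
            mx_lfun iota (nceval (fun a => a%:M) A t).
Proof.
move=> f1 fM fT t.
pose c a : lfun_ring (Wt L r m) := iota a *: \1%VF.
transitivity (nceval c (fun i => mx_lfun iota (A i) : lfun_ring _) t).
  apply: (@nceval_morph _ _ H (lfun_ring (Wt L r m)) f) => [x y|x y|a|i] /=.
  - exact: linearD.
  - exact: fM.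
  - by rewrite linearZ f1.
  - exact: fT.
symmetry; apply: (@nceval_morph _ _ _ (lfun_ring (Wt L r m)) (mx_lfun iota)).
- exact: raddfD.
- exact: mx_lfunM.
- exact: mx_lfun_scalar.
- by [].
Qed.

Lemma fixedSpace_agenv (K : fieldType) (A : falgType K) (f : 'AEnd(A)) (U : {vspace A}) :
  (U <= fixedSpace f)%VS -> (agenv U <= fixedSpace f)%VS.
Proof.
move=> sUf; apply: agenv_sub_modl.
  by rewrite -memvE; apply/fixedSpaceP; rewrite rmorph1.
exact: subv_trans (prodvSl _ sUf) (asubv [aspace of fixedSpace f]).
Qed.

Lemma ahom_involutive_gen (K : fieldType) (A : falgType K) (f : 'AEnd(A)) (s : seq A) :
  agenv <<s>>%VS = fullv -> {in s, forall x, f (f x) = x} -> involutive f.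
Proof.
move=> s_gen fK x.
have : (<<s>> <= fixedSpace (f \o f)%AF)%VS.
  by apply/span_subvP => y /fK fKy; apply/fixedSpaceP; rewrite comp_lfunE.
move/fixedSpace_agenv; rewrite s_gen => /subvP/(_ x (memvf x))/fixedSpaceP.
by rewrite comp_lfunE.
Qed.

Lemma limg_eq_fixedSpace (K : fieldType) (H : falgType K) (vT : vectType K)
    (sigma : 'AEnd(H)) (pi : {linear H -> 'End(vT)}) (h : H) :
    (forall x y, pi (x * y) = (pi x \o pi y)%VF) -> involutive sigma ->
    pi h = 0 -> pi (sigma h) = \1%VF ->
  limg (linfun pi) = (linfun pi @: fixedSpace sigma)%VS.
Proof.
move=> piM sigmaK pi_h pi_sigma_h.
apply/eqP; rewrite eqEsubv; apply/andP; split; last exact: limgS (subvf _).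
apply/subvP => _ /memv_imgP[x _ ->]; set y := x - h * x.
apply/memv_imgP; exists (y + sigma y).
  by apply/fixedSpaceP; rewrite linearD addrC; congr (_ + _); exact: sigmaK.
rewrite !lfunE /= linearD /y rmorphB rmorphM !linearB !piM pi_h pi_sigma_h.
by rewrite comp_lfun0l subr0 comp_lfun1l subrr addr0.
Qed.

(* Only the generation of H by the T i, the values of sigma and pi on them and
   the multiplicativity of pi enter the argument. *)
Theorem corollary6p2
  (L : closedFieldType) (iota : {rmorphism Kq -> L})
  (Lalg : forall x : L, exists2 p : {poly Kq}, p != 0 & root (map_poly iota p) x)
  (m r : nat) (hr : (2 <= r)%N) (hmr : (m ^ 2 < r)%N)
  (H : falgType L) (T : 'I_r.-1 -> H)
  (Tquad : forall i, T i * T i = (qpar iota - (qpar iota)^-1) *: T i + 1)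
  (Tbraid : forall i j : 'I_r.-1, val j = (val i).+1 ->
              T i * T j * T i = T j * T i * T j)
  (Tcomm : forall i j : 'I_r.-1, ((val i).+1 < val j)%N -> T i * T j = T j * T i)
  (Tgen : agenv <<[seq T i | i : 'I_r.-1]>>%VS = fullv)
  (Hdim : \dim {:H} = r`!)
  (sigma : 'AEnd(H))
  (sigmaT : forall i, sigma (T i) = (qpar iota - (qpar iota)^-1)%:A - T i)
  (pi : {linear H -> 'End(Wt L r m)})
  (pi1 : pi 1 = \1%VF)
  (piM : forall x y, pi (x * y) = (pi x \o pi y)%VF)
  (piT : forall i, pi (T i) = PiT (qpar iota) m i) :
  let Aq := limg (linfun pi) in
  let Cq := (linfun pi @: fixedSpace sigma)%VS in
  Aq = Cq /\ (forall f : 'End(Wt L r m), commutant Cq f <-> commutant Aq f).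
Proof.
move=> Aq Cq.
have [t [t_A t_B]] := exists_qperm_separating_ncterm hmr.
pose h := nceval (fun a => (iota a)%:A) T t.
have pi_h : pi h = 0.
  rewrite (lfun_nceval (A := qperm_mx qK m)) ?t_A ?raddf0 // => i.
  by rewrite piT mx_lfun_qperm.
have pi_sigma_h : pi (sigma h) = \1%VF.
  pose B (i : 'I_r.-1) := (qK - qK^-1)%:M - qperm_mx qK m i.
  have -> : pi (sigma h) = mx_lfun iota (nceval (fun a => a%:M) B t).
    apply: (lfun_nceval (f := pi \o sigma)) => [||i] /=.
    - by rewrite rmorph1.
    - by move=> x y; rewrite rmorphM piM.
    rewrite sigmaT linearB linearZ /= pi1 piT mx_lfunB mx_lfun_scalar mx_lfun_qperm.
    by rewrite rmorphB fmorphV.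
  by rewrite t_B mx_lfun_scalar rmorph1 scale1r.
have sigmaK : involutive sigma.
  apply: (ahom_involutive_gen Tgen) => _ /mapP[i _ ->].
  by rewrite sigmaT linearB linearZ /= rmorph1 sigmaT opprB addrC subrK.
have AqCq : Aq = Cq := limg_eq_fixedSpace piM sigmaK pi_h pi_sigma_h.
by split=> // f; rewrite AqCq.
Qed.
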